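(* Let $\delta\in(0,1)$. For all $x,y\in[\delta,1]$, \[ (-\ln x)-(-\ln y)+\frac{x-y}{y}\ \ge\ \frac{|\ln x-\ln y|^2}{2\ln(1/\delta)\vee 4}. \]
   Context: The term $\frac{x-y}{y}$ equals $-\nabla(-\ln)|_y\,(x-y)$. $a\vee b=\max(a,b)$. *)

From Stdlib Require Import Reals.

(** With [t = ln x - ln y] the left-hand side is [exp t - 1 - t].  For
    [t >= -2], [exp t = exp (t/2) ^ 2 >= (1 + t/2) ^ 2 = 1 + t + t^2/4], so
    [exp t - 1 - t >= t^2/4].  For [t < -2] the linear part alone suffices:
    [exp t - 1 - t > -t - 1 >= t^2/M] as soon as [-t <= M/2].  On [[delta, 1]]
    only the lower bound [t >= ln delta = - ln (1/delta)] is needed, and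
    [M = Rmax (2 ln (1/delta)) 4] is large enough for both regimes. *)
From Stdlib Require Import Reals Lra Psatz.
Open Scope R_scope.

Lemma ln_le x y : 0 < x -> x <= y -> ln x <= ln y.
Proof.
  intros hx hxy; destruct (Rle_lt_or_eq_dec _ _ hxy) as [hlt | ->].
  - now left; apply ln_increasing.
  - apply Rle_refl.
Qed.

Lemma sqr_1_plus_half_le_exp t : -2 <= t -> (1 + t / 2) ^ 2 <= exp t.
Proof.
  intros ht.
  assert (hsplit : exp t = exp (t / 2) ^ 2).
  { replace t with (t / 2 + t / 2) at 1 by field.
    rewrite exp_plus; ring. }
  assert (hhalf : 1 + t / 2 <= exp (t / 2)) by apply exp_ineq1_le.
  rewrite hsplit; apply pow_incr; lra.
Qed.

Lemma exp_sub_1_sub_ge_sqr_div t M :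
  4 <= M -> - M <= 2 * t -> t ^ 2 / M <= exp t - 1 - t.
Proof.
  intros hM4 hMt.
  apply (Rmult_le_reg_r M); [lra |].
  replace (t ^ 2 / M * M) with (t ^ 2) by (field; lra).
  destruct (Rle_lt_dec (-2) t) as [ht | ht].
  - pose proof (sqr_1_plus_half_le_exp t ht); nra.
  - pose proof (exp_pos t); nra.
Qed.

Lemma neg_ln_bregman_eq x y : 0 < x -> 0 < y ->
  (- ln x) - (- ln y) + (x - y) / y = exp (ln x - ln y) - 1 - (ln x - ln y).
Proof.
  intros hx hy.
  assert (hratio : exp (ln x - ln y) = x / y).
  { unfold Rminus; rewrite exp_plus, exp_Ropp, !exp_ln by assumption.
    reflexivity. }
  rewrite hratio.
  field; lra.
Qed.

Lemma ln_sub_ge_ln delta x y :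
  0 < delta -> delta <= x -> 0 < y <= 1 -> ln delta <= ln x - ln y.
Proof.
  intros hd hx hy.
  pose proof (ln_le delta x hd hx).
  pose proof (ln_le y 1 (proj1 hy) (proj2 hy)).
  rewrite ln_1 in *; lra.
Qed.

Theorem lemma3 (delta : R) (hd0 : 0 < delta) (hd1 : delta < 1) :
  forall x y : R, delta <= x <= 1 -> delta <= y <= 1 ->
    (- ln x) - (- ln y) + (x - y) / y >=
    (Rabs (ln x - ln y)) ^ 2 / Rmax (2 * ln (1 / delta)) 4.
Proof.
  intros x y hx hy.
  rewrite neg_ln_bregman_eq, pow2_abs by lra.
  apply Rle_ge, exp_sub_1_sub_ge_sqr_div; [apply Rmax_r |].
  assert (hlog : ln (1 / delta) = - ln delta)
    by (rewrite Rdiv_1_l; apply ln_Rinv, hd0).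
  pose proof (Rmax_l (2 * ln (1 / delta)) 4).
  pose proof (ln_sub_ge_ln delta x y hd0 (proj1 hx) ltac:(lra)).
  lra.
Qed.
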